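(* Let $p$ be a prime, let $q$ be a rational number and let $a$ be a positive integer. Then the number of $d \in \{0, \ldots, p-1\}$ such that $$\sum_{i=a}^{a+d} \frac{1}{c_p(i)} \equiv q \pmod p$$ is less than $p^{0.835}$.
   Context: $c_p(1) < c_p(2) < \cdots$ denotes the increasing sequence of all positive integers not divisible by $p$. For rational numbers $x, y$, $x \equiv y \pmod p$ means $\nu_p(x - y) > 0$, where $\nu_p$ is the $p$-adic valuation. *)

From Stdlib Require Import Reals.
From mathcomp Require Import all_boot all_order all_algebra.
Set Implicit Arguments. Unset Strict Implicit. Unset Printing Implicit Defensive.
Import Order.TTheory GRing.Theory Num.Theory.

(* c_p(i), i >= 1: the i-th element (1-indexed) of the increasing sequence of
   positive integers not divisible by p.  The first i*p positive integers
   contain at least i such numbers when p >= 2. *)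
Definition cp (p i : nat) : nat :=
  nth 0%N [seq n <- iota 1 (i * p) | ~~ (p %| n)%N] i.-1.

(* p-adic valuation of a nonzero rational (numq and denq are coprime). *)
Definition nu_p (p : nat) (r : rat) : int :=
  (Posz (logn p `|numq r|%N) - Posz (logn p `|denq r|%N))%R.

(* x == y (mod p) for rationals: nu_p(x - y) > 0 (with nu_p(0) = +oo). *)
Definition rat_congr (p : nat) (x y : rat) : bool :=
  (x == y) || (0 < nu_p p (x - y))%R.

Definition Hsum (p a d : nat) : rat :=
  (\sum_(a <= i < a + d + 1) ((cp p i)%:R)^-1)%R.

(* Every c_p(i) is prime to p, so the sums reduce to F(d) = \sum_{i=a}^{a+d} 1/c_p(i)
   in F_p, and all d in the set share one value of F.  Modulo p, c_p(i) runs
   cyclically through 1, ..., p - 1.  Fix G >= 1.  If d and d + g (1 <= g <= G)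
   are both solutions and the cycle does not wrap in between, then
   1/(r + 1) + ... + 1/(r + g) = 0 where c_p(a + d + 1) = r + 1 (mod p), i.e. r is
   a root of the derivative of (X + 1) ... (X + g), a nonzero polynomial of degree
   g - 1; as r determines d, this happens for at most g - 1 values of d.  Fewer
   than G solutions sit where the cycle wraps, and the remaining solutions are
   more than G apart, so there are at most (p - 1)/(G + 1) + 1 of them.  The total
   G + C(G, 2) + (p - 1)/(G + 1) is below p^(5/6) for G the integer cube root of p
   (small p by computation), and 5/6 < 0.835. *)

From Stdlib Require Import Reals Lra ZArith.
From mathcomp Require Import all_boot all_order all_algebra.
From mathcomp Require Import zify ring.
Set Implicit Arguments. Unset Strict Implicit. Unset Printing Implicit Defensive.
Import GRing.Theory Num.Theory.

Section ClosedForm.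
Variable p : nat.
Hypothesis p_gt1 : 1 < p.

Let nondvd K := [seq n <- iota 1 (K * p) | ~~ (p %| n)].

Lemma nondvdS K : nondvd K.+1 = nondvd K ++ [seq K * p + j | j <- iota 1 p.-1].
Proof.
rewrite /nondvd mulSnr iotaD filter_cat; congr (_ ++ _).
have -> : iota (1 + K * p) p = iota (1 + K * p) p.-1 ++ [:: K.+1 * p].
  have -> : [:: K.+1 * p] = iota (1 + K * p + p.-1) 1 by congr [:: _]; lia.
  by rewrite -iotaD; congr iota; lia.
rewrite filter_cat /= dvdn_mull // cats0 addnC iotaDl.
apply/all_filterP/allP => x /mapP[j]; rewrite mem_iota => j_lt ->.
by rewrite dvdn_addr ?dvdn_mull //; apply/negP => /(dvdn_leq _); lia.
Qed.

Lemma size_nondvd K : size (nondvd K) = K * p.-1.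
Proof.
elim: K => [|K IH]; first by rewrite /nondvd mul0n.
by rewrite nondvdS size_cat size_map size_iota IH mulSnr.
Qed.

Lemma nth_nondvd K k j : k < K -> j < p.-1 ->
  nth 0 (nondvd K) (k * p.-1 + j) = k * p + j.+1.
Proof.
elim: K => [|K IH] // lt_kK lt_j.
rewrite nondvdS nth_cat size_nondvd.
have [lt_k|ge_k] := ltnP k K; first by rewrite ifT ?IH //; nia.
have -> : k = K by lia.
by rewrite ltnNge leq_addr /= addKn (nth_map 0) ?size_iota // nth_iota.
Qed.

Lemma cpE i : 0 < i -> cp p i = i.-1 %/ p.-1 * p + (i.-1 %% p.-1).+1.
Proof.
move=> i_gt0; rewrite /cp {1}(divn_eq i.-1 p.-1) nth_nondvd ?ltn_mod //; last lia.
by apply: (leq_ltn_trans (leq_div _ _)); lia.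
Qed.

End ClosedForm.

Local Open Scope ring_scope.

Section ReductionModp.
Variable p : nat.

(* Reduction mod p is only defined on p-integral rationals, hence a relation. *)
Definition redp (r : rat) (t : 'F_p) : Prop := exists u v : int,
  [/\ v%:~R != 0 :> 'F_p, r = u%:~R / v%:~R & t = u%:~R / v%:~R].

Lemma intr_neq0_of_Fp (v : int) : v%:~R != 0 :> 'F_p -> v%:~R != 0 :> rat.
Proof. by apply: contra; rewrite intr_eq0 => /eqP ->. Qed.

Lemma redp0 : redp 0 0.
Proof. by exists 0, 1; rewrite !mul0r. Qed.

Lemma redpD r1 r2 t1 t2 : redp r1 t1 -> redp r2 t2 -> redp (r1 + r2) (t1 + t2).
Proof.
move=> [u1 [v1 [v1F -> ->]]] [u2 [v2 [v2F -> ->]]].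
exists (u1 * v2 + u2 * v1), (v1 * v2); split; first by rewrite rmorphM mulf_neq0.
all: have v1Q := intr_neq0_of_Fp v1F; have v2Q := intr_neq0_of_Fp v2F.
all: by rewrite !rmorphD !rmorphM /=; field; rewrite ?v1F ?v2F ?v1Q ?v2Q.
Qed.

Lemma redpN r t : redp r t -> redp (- r) (- t).
Proof. by move=> [u [v [vF -> ->]]]; exists (- u), v; rewrite !rmorphN !mulNr. Qed.

Lemma redp_sum (I : Type) (s : seq I) (P : pred I) (F1 : I -> rat) (F2 : I -> 'F_p) :
  (forall i, P i -> redp (F1 i) (F2 i)) ->
  redp (\sum_(i <- s | P i) F1 i) (\sum_(i <- s | P i) F2 i).
Proof.
by move=> redpF; apply: big_ind2 => //; [apply: redp0 | move=> *; apply: redpD].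
Qed.

Lemma redp_invn (c : nat) : c%:R != 0 :> 'F_p -> redp c%:R^-1 c%:R^-1.
Proof. by move=> cF; exists 1, c; rewrite !mul1r. Qed.

Lemma redp_fun r t1 t2 : redp r t1 -> redp r t2 -> t1 = t2.
Proof.
move=> [u1 [v1 [v1F -> ->]]] [u2 [v2 [v2F e ->]]].
have v1Q := intr_neq0_of_Fp v1F; have v2Q := intr_neq0_of_Fp v2F.
have cross : u1 * v2 = u2 * v1.
  by apply: (@intr_inj rat); rewrite !rmorphM /=; apply/eqP; rewrite -eqr_div // e.
by apply/eqP; rewrite eqr_div // -!rmorphM cross.
Qed.

Hypothesis p_prime : prime p.

Lemma redp_nu_p_gt0 r : 0 < nu_p p r -> redp r 0.
Proof.
have charFp := pchar_Fp p_prime.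
rewrite /nu_p subr_gt0 ltz_nat => /(leq_ltn_trans (leq0n _)).
rewrite logn_gt0 mem_primes => /and3P[_ _ p_num].
have p_den : ~~ (p %| `|denq r|)%N.
  by rewrite -prime_coprime // (coprime_dvdl p_num) ?coprime_num_den.
exists (numq r), (denq r); split; first by rewrite -(dvdz_pcharf charFp).
  by rewrite divq_num_den.
have /eqP -> : (numq r)%:~R == 0 :> 'F_p by rewrite -(dvdz_pcharf charFp).
by rewrite mul0r.
Qed.

Lemma redp_congr x y t : rat_congr p x y -> redp x t -> redp y t.
Proof.
case/orP => [/eqP -> red_y | /redp_nu_p_gt0 /redpN]; first exact: red_y.
rewrite opprB => red_yx red_x.
by have := redpD red_x red_yx; rewrite addrC subrK oppr0 addr0.
Qed.

Lemma natrFp_neq0 n : (0 < n < p)%N -> n%:R != 0 :> 'F_p.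
Proof.
by case/andP=> n_gt0 n_lt; rewrite -val_eqE /= val_Fp_nat // modn_small // -lt0n.
Qed.

Lemma natrFp_inj m n : (m < p)%N -> (n < p)%N -> m%:R = n%:R :> 'F_p -> m = n.
Proof. by move=> m_lt n_lt /(congr1 val); rewrite /= !val_Fp_nat // !modn_small. Qed.

End ReductionModp.

Section LogDerivative.
Variable R : fieldType.

Lemma horner_deriv_prod_XsubC (I : Type) (r : seq I) (F : I -> R) (z : R) :
  all (fun i => z - F i != 0) r ->
  (\prod_(i <- r) ('X - (F i)%:P))^`().[z] =
  (\prod_(i <- r) ('X - (F i)%:P)).[z] * \sum_(i <- r) (z - F i)^-1.
Proof.
elim: r => [|i r IH] /=; first by rewrite !big_nil derivC hornerC mulr0.
move=> /andP[zi_neq0 /IH {}IH].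
rewrite !big_cons derivM derivXsubC mul1r hornerD !hornerM hornerXsubC IH.
by field.
Qed.

Lemma deriv_monic_neq0 (P : {poly R}) : P \is monic -> (size P).-1%:R != 0 :> R ->
  P^`() != 0.
Proof.
move=> P_monic n_neq0.
have P_gt1 : (1 < size P)%N.
  by move: n_neq0; case: (size P) => [|[|]]; rewrite ?eqxx.
apply: contra_neq n_neq0 => P'_eq0.
have := coef_deriv P (size P).-2; rewrite P'_eq0 coef0 prednK -?subn1 ?subn_gt0 //.
by rewrite subn1 -lead_coefE (monicP P_monic) => ->.
Qed.

End LogDerivative.

Lemma card_le_bounded_inj (T : finType) (A : {set T}) (f : T -> nat) n :
  {in A &, injective f} -> {in A, forall x, f x < n}%N -> (#|A| <= n)%N.
Proof.
move=> f_inj f_lt; rewrite cardE -(size_map f) -(size_iota 0 n).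
apply: uniq_leq_size => [|y /mapP[x]]; last by rewrite mem_enum mem_iota => /f_lt ? ->.
by rewrite map_inj_in_uniq ?enum_uniq // => x1 x2; rewrite !mem_enum; apply: f_inj.
Qed.

Lemma card_bigcup_ord (T : finType) n (A : nat -> {set T}) :
  (#|\bigcup_(i < n) A i| <= \sum_(i < n) #|A i|)%N.
Proof.
elim: n => [|n IH]; first by rewrite !big_ord0 cards0.
by rewrite !big_ord_recr /=; apply: leq_trans (leq_card_setU _ _) (leq_add IH _).
Qed.

(* Two elements of A in one block of G.+1 consecutive integers are G-close, so
   each block holds at most one element of A without a G-close successor. *)
Lemma card_sparse n G (A : {set 'I_n}) :
  (#|A :\: [set d : 'I_n | [exists e in A, (d < e <= d + G)%N]]|
    <= n.-1 %/ G.+1 + 1)%N.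
Proof.
apply: (@card_le_bounded_inj _ _ (fun d : 'I_n => d %/ G.+1)%N); last first.
  move=> d _ /=; rewrite addn1 ltnS leq_div2r // -ltnS prednK //.
  exact: leq_ltn_trans (ltn_ord d).
suff sep : forall d1 d2 : 'I_n, d2 \in A -> (d1 < d2)%N ->
    (d1 %/ G.+1 = d2 %/ G.+1)%N -> [exists e in A, (d1 < e <= d1 + G)%N].
  move=> d1 d2; rewrite !inE => /andP[far1 A1] /andP[far2 A2] same; apply: val_inj.
  case: (ltngtP d1 d2) => // lt_d.
  - by case/negP: far1; apply: sep A2 lt_d same.
  - by case/negP: far2; apply: sep A1 lt_d (esym same).
move=> d1 d2 A2 lt_d same; apply/existsP; exists d2; rewrite A2 lt_d /=.
have := divn_eq d1 G.+1; have := divn_eq d2 G.+1; have := ltn_mod d2 G.+1.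
by rewrite same; lia.
Qed.

Definition fiber_bound (p G : nat) : nat := G + 'C(G, 2) + p.-1 %/ G.+1.

Section Fiber.
Variables (p a : nat).
Hypothesis p_prime : prime p.

Let p_gt1 : (1 < p)%N := prime_gt1 p_prime.

Definition cpF i : 'F_p := (cp p i)%:R.

Definition HsumF d : 'F_p := \sum_(a <= i < a + d + 1) (cpF i)^-1.

(* c_p(a + d + 1) = cyc d + 1 (mod p), since c_p runs cyclically through the
   residues 1, ..., p - 1. *)
Definition cyc d := ((a + d) %% p.-1)%N.

Lemma cpFE i : (0 < i)%N -> cpF i = (i.-1 %% p.-1).+1%:R.
Proof. by move=> i_gt0; rewrite /cpF cpE // natrD natrM pchar_Fp_0 // mulr0 add0r. Qed.

Lemma cpF_neq0 i : (0 < i)%N -> cpF i != 0.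
Proof.
by move=> i_gt0; rewrite cpFE // natrFp_neq0 //= -[p]prednK ?ltnS ?ltn_mod; lia.
Qed.

Lemma redp_Hsum d : (0 < a)%N -> redp (Hsum p a d) (HsumF d).
Proof.
move=> a_gt0; rewrite /Hsum /HsumF big_nat_cond [X in redp _ X]big_nat_cond.
apply: redp_sum => i /andP[/andP[a_le _] _].
by apply: redp_invn; apply: cpF_neq0; apply: leq_trans a_le.
Qed.

Lemma HsumF_add d g :
  HsumF (d + g) = HsumF d + \sum_(0 <= k < g) (cpF (a + d + k).+1)^-1.
Proof.
rewrite /HsumF (big_cat_nat (n := a + d + 1)) /=; [|lia|lia].
rewrite -{2}[(a + d + 1)%N]add0n big_addn.
have -> : (a + (d + g) + 1 - (a + d + 1) = g)%N by lia.
by congr (_ + _); apply: eq_bigr => k _; rewrite addn1 addnS addnC.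
Qed.

Lemma cyc_lt d : (cyc d < p.-1)%N.
Proof. by rewrite ltn_mod; lia. Qed.

Lemma cyc_inj d1 d2 : (d1 < p.-1)%N -> (d2 < p.-1)%N -> cyc d1 = cyc d2 -> d1 = d2.
Proof. by move=> lt1 lt2 /eqP; rewrite eqn_modDl !modn_small // => /eqP. Qed.

Lemma cpF_cyc d k : (cyc d + k < p.-1)%N -> cpF (a + d + k).+1 = (cyc d + k).+1%:R.
Proof. by move=> lt_p; rewrite cpFE //= -modnDml modn_small. Qed.

Definition rising g : {poly 'F_p} := \prod_(0 <= k < g) ('X - (- k.+1%:R)%:P).

Lemma rising_deriv_neq0 g : (0 < g < p)%N -> (rising g)^`() != 0.
Proof.
move=> g_bounds; apply: deriv_monic_neq0; first exact: monic_prod_XsubC.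
by rewrite /rising size_prod_XsubC /index_iota subn0 size_iota natrFp_neq0.
Qed.

Lemma size_rising_deriv g : (size (rising g)^`() <= g)%N.
Proof.
have := lt_size_deriv (monic_neq0 (monic_prod_XsubC _ _ _) : rising g != 0).
by rewrite {2}/rising size_prod_XsubC /index_iota subn0 size_iota.
Qed.

(* F(d + g) = F(d) within one cycle says 1/(r + 1) + ... + 1/(r + g) = 0 for
   r = cyc d, and this sum is the logarithmic derivative of rising g at r. *)
Lemma root_rising_deriv d g : (cyc d + g <= p.-1)%N -> HsumF (d + g) = HsumF d ->
  root (rising g)^`() (cyc d)%:R.
Proof.
move=> in_cycle; rewrite HsumF_add => /eqP; rewrite -subr_eq0 addrC addKr => /eqP.
rewrite /root /rising horner_deriv_prod_XsubC => [window0|]; last first.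
  apply/allP => k; rewrite mem_index_iota => k_lt.
  by rewrite opprK -natrD natrFp_neq0 //; lia.
suff -> : \sum_(0 <= k < g) ((cyc d)%:R - - k.+1%:R : 'F_p)^-1 = 0 by rewrite mulr0.
apply: etrans window0; apply: eq_big_nat => k k_lt.
by rewrite opprK -natrD addnS cpF_cyc //; lia.
Qed.

Definition repeats g := [set d : 'I_p |
  [&& (d < p.-1)%N, (cyc d + g <= p.-1)%N & HsumF (d + g) == HsumF d]].

Definition crossing G := [set d : 'I_p | (d < p.-1)%N && (p - G <= cyc d)%N].

Lemma card_repeats g : (0 < g)%N -> (#|repeats g| <= g.-1)%N.
Proof.
move=> g_gt0; have [g_lt | g_ge] := ltnP g p; last first.
  suff -> : repeats g = set0 by rewrite cards0.
  by apply/setP => d; rewrite !inE; apply/and3P => -[_ ? _]; lia.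
set rs := [seq (cyc d)%:R : 'F_p | d : 'I_p <- enum (repeats g)].
have rs_roots : all (root (rising g)^`()) rs.
  apply/allP => x /mapP[d]; rewrite mem_enum inE => /and3P[_ in_cycle /eqP e] ->.
  exact: root_rising_deriv.
have rs_uniq : uniq rs.
  rewrite map_inj_in_uniq ?enum_uniq // => d1 d2; rewrite !mem_enum !inE.
  move=> /and3P[lt1 _ _] /and3P[lt2 _ _] e; apply/val_inj/cyc_inj => //.
  by apply: (natrFp_inj p_prime _ _ e); apply: leq_trans (cyc_lt _) (leq_pred p).
have := max_poly_roots (rising_deriv_neq0 _) rs_roots rs_uniq.
rewrite size_map -cardE g_gt0 g_lt => /(_ isT) card_lt.
by rewrite -ltnS prednK //; apply: leq_trans card_lt (size_rising_deriv g).
Qed.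

Lemma card_crossing G : (#|crossing G| <= G.-1)%N.
Proof.
apply: (@card_le_bounded_inj _ _ (fun d : 'I_p => cyc d - (p - G))%N).
  move=> d1 d2; rewrite !inE => /andP[lt1 ge1] /andP[lt2 ge2] e.
  by apply/val_inj/cyc_inj => //=; lia.
by move=> d; rewrite inE => /andP[_ ge]; have := cyc_lt d; lia.
Qed.

Lemma close_cover G (A : {set 'I_p}) :
  {in A &, forall d e : 'I_p, HsumF d = HsumF e} ->
  A :&: [set d : 'I_p | [exists e in A, (d < e <= d + G)%N]]
    \subset crossing G :|: \bigcup_(g < G) repeats g.+1.
Proof.
move=> HsumF_const; apply/subsetP => d.
rewrite !inE => /andP[Ad /existsP[e /and3P[Ae lt_de le_eG]]].
have d_lt : (d < p.-1)%N by have := ltn_ord e; lia.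
have [wraps | in_cycle] := ltnP p.-1 (cyc d + (e - d)).
  by rewrite d_lt /=; apply/orP; left; lia.
apply/orP; right; apply/bigcupP.
have g_lt : ((e - d).-1 < G)%N by lia.
exists (Ordinal g_lt) => //=; rewrite inE d_lt prednK ?subn_gt0 // in_cycle /=.
by rewrite subnKC ?(ltnW lt_de) // (HsumF_const _ _ Ae Ad).
Qed.

Lemma card_HsumF_fiber G t : (0 < G)%N ->
  (#|[set d : 'I_p | HsumF d == t]| <= fiber_bound p G)%N.
Proof.
move=> G_gt0; set A := [set d | _].
rewrite -(cardsID [set d : 'I_p | [exists e in A, (d < e <= d + G)%N]] A).
have HsumF_const : {in A &, forall d e : 'I_p, HsumF d = HsumF e}.
  by move=> d e; rewrite !inE => /eqP -> /eqP ->.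
have card_close : (#|A :&: [set d : 'I_p | [exists e in A, (d < e <= d + G)%N]]|
    <= G.-1 + 'C(G, 2))%N.
  apply: leq_trans (subset_leq_card (close_cover G HsumF_const)) _.
  apply: leq_trans (leq_card_setU _ _) (leq_add (card_crossing G) _).
  apply: leq_trans (card_bigcup_ord G (fun g => repeats g.+1)) _.
  by rewrite -bin2_sum big_mkord; apply: leq_sum => g _; apply: card_repeats.
apply: leq_trans (leq_add card_close (card_sparse G A)) _.
by rewrite /fiber_bound; lia.
Qed.

End Fiber.

Close Scope ring_scope.

Lemma cube_root_exists n : exists H, H ^ 3 <= n < H.+1 ^ 3.
Proof.
elim: n => [|n [H /andP[lo hi]]]; first by exists 0.
have [lt_n | ge_n] := ltnP n.+1 (H.+1 ^ 3).
  by exists H; rewrite lt_n (leq_trans lo).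
by exists H.+1; rewrite ge_n (leq_ltn_trans hi) // ltn_exp2r.
Qed.

(* fiber_bound p H <= 2 H^2, and (2 H^2)^6 = 2^6 H^12 < H^15 <= p^5 once H^3 > 2^6. *)
Lemma fiber_bound_cube_root p H : 6 <= H -> H ^ 3 <= p < H.+1 ^ 3 ->
  fiber_bound p H ^ 6 < p ^ 5.
Proof.
move=> H_ge6 /andP[lo hi].
have quot_lt : p.-1 %/ H.+1 < H.+1 ^ 2 by rewrite ltn_divLR // -expnSr; lia.
have bin_eq : 'C(H, 2) * 2 = H * H.-1 by rewrite -[2]/(2`!) bin_ffact ffactnS ffactn1.
have bound_le : fiber_bound p H <= 2 * H ^ 2.
  by move: quot_lt; rewrite /fiber_bound !expnS expn0; nia.
apply: leq_ltn_trans (_ : (2 * H ^ 2) ^ 6 < p ^ 5).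
  by rewrite leq_exp2r.
rewrite expnMn -expnM; apply: (@leq_trans (H ^ 3 * H ^ (2 * 6))).
  rewrite ltn_pmul2r ?expn_gt0 ?(leq_trans _ H_ge6) //.
  by apply: (@leq_trans (6 ^ 3)); rewrite ?leq_exp2r.
by rewrite -expnD -[3 + _]/(3 * 5) expnM leq_exp2r.
Qed.

Lemma expn_Natpow m n : m ^ n = Nat.pow m n.
Proof. by elim: n => // n IH; rewrite expnS IH -multE. Qed.

Definition fiber_bound_okZ p G : bool :=
  Z.ltb (Z.pow (Z.of_nat (fiber_bound p G)) (Z.of_nat 6))
        (Z.pow (Z.of_nat p) (Z.of_nat 5)).

Lemma fiber_bound_okZP p G : fiber_bound_okZ p G -> fiber_bound p G ^ 6 < p ^ 5.
Proof.
move/Z.ltb_lt; rewrite -!Znat.Nat2Z.inj_pow -!expn_Natpow => /Znat.Nat2Z.inj_lt.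
by move/ltP.
Qed.

Lemma fiber_bound_small_cases :
  all (fun p => has (fiber_bound_okZ p) (iota 1 5)) (iota 2 214).
Proof. by vm_compute. Qed.

Lemma exists_small_fiber_bound p : 1 < p -> exists2 G, 0 < G & fiber_bound p G ^ 6 < p ^ 5.
Proof.
move=> p_gt1; have [H cube_H] := cube_root_exists p.
have [H_ge6 | H_lt6] := leqP 6 H.
  by exists H; [lia | apply: fiber_bound_cube_root].
have p_small : p \in iota 2 214.
  have cube_le : H.+1 ^ 3 <= 216 by rewrite -[216]/(6 ^ 3) leq_exp2r.
  by move: cube_H => /andP[_ hi]; rewrite mem_iota; lia.
have /hasP[G] := allP fiber_bound_small_cases p p_small.
by rewrite mem_iota => G_range /fiber_bound_okZP; exists G; lia.
Qed.

Lemma INR_lt_Rpower_835 N p : 1 < p -> N ^ 6 < p ^ 5 ->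
  Rlt (INR N) (Rpower (INR p) (Rdiv (IZR 835) (IZR 1000))).
Proof.
Local Open Scope R_scope.
move=> /ltP /(lt_INR 1) /= p_gt1; rewrite !expn_Natpow => /ltP /lt_INR.
rewrite !pow_INR /Rpower => lt_pow.
have ln_p_pos : 0 < ln (INR p) by rewrite -ln_1; apply: ln_increasing; lra.
case: N lt_pow => [|N] lt_pow; first exact: exp_pos.
have N_pos : 0 < INR N.+1 by apply: lt_0_INR; apply/ltP.
have ln_lt : 6 * ln (INR N.+1) < 5 * ln (INR p).
  have := ln_increasing _ _ (pow_lt _ 6 N_pos) lt_pow.
  rewrite !ln_pow //; last lra.
  by have [-> ->] : INR 6 = 6 /\ INR 5 = 5 by rewrite !INR_IZR_INZ.
by rewrite -(exp_ln _ N_pos); apply: exp_increasing; lra.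
Qed.

Theorem lemma3p4 (p : nat) (q : rat) (a : nat) :
  prime p -> (0 < a)%N ->
  Rlt (INR #|[set d : 'I_p | rat_congr p (Hsum p a d) q]|)
      (Rpower (INR p) (Rdiv (IZR 835) (IZR 1000))).
Proof.
move=> p_prime a_gt0; have p_gt1 := prime_gt1 p_prime.
have [G G_gt0 G_ok] := exists_small_fiber_bound p_gt1.
apply: INR_lt_Rpower_835 p_gt1 (leq_ltn_trans _ G_ok); rewrite leq_exp2r //.
set D := [set d : 'I_p | _].
have [->|[d0 D_d0]] := set_0Vmem D; first by rewrite cards0.
apply: leq_trans (card_HsumF_fiber a p_prime (HsumF p a d0) G_gt0).
have red_q d : d \in D -> redp q (HsumF p a d).
  by rewrite inE => /(redp_congr p_prime); apply; apply: redp_Hsum.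
apply/subset_leq_card/subsetP => d D_d; rewrite inE.
by rewrite (redp_fun (red_q d D_d) (red_q d0 D_d0)).
Qed.
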